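(* Let $\mathcal{C}$ be any class of connected graphs, and for each positive integer $n$ let $\mathcal{C}_n$ denote the set of isomorphism classes of $n$-vertex graphs in $\mathcal{C}$. Then $\mathcal{C}$ has local complexity at most $\log(|\mathcal{C}_n|)+O(\log n)$. In particular, if $\mathcal{C}$ is tiny (i.e., there is a constant $c>0$ with $|\mathcal{C}_n|\le c^n$ for all $n$), then the local complexity of $\mathcal{C}$ is $O(n)$.
   Context: All graphs are finite, simple, undirected and connected; logarithms are binary. The vertices of an $n$-vertex graph $G$ carry distinct identifiers from $\{1,\dots,\mathrm{poly}(n)\}$. A proof for $G$ is a map $P:V(G)\to\{0,1\}^*$ (it may depend on the identifiers); its size is the maximum length of a certificate $P(v)$. A prover for a class $\mathcal{G}$ maps each $G\in\mathcal{G}$ to a proof for $G$. A verifier $\mathcal{A}$ maps $(G,P,v)$ to $\{0,1\}$ ($v$ accepts if the output is 1); it is local if the output of $v$ depends only on the identifiers and certificates of the vertices in the closed neighborhood $N[v]$ (optionally also on the graph induced by $N[v]$). A proof labeling scheme for $\mathcal{G}$ is a prover–local verifier pair such that: if $G\in\mathcal{G}$, every vertex accepts the prover's proof; if $G\notin\mathcal{G}$, for every proof some vertex rejects. Its complexity is the maximum size of a proof assigned by the prover to an $n$-vertex graph of $\mathcal{G}$, as a function of $n$; the local complexity of $\mathcal{G}$ is the minimum complexity of a proof labeling scheme for $\mathcal{G}$. *)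

From mathcomp Require Import all_boot all_fingroup.
Set Implicit Arguments. Unset Strict Implicit. Unset Printing Implicit Defensive.

Definition edges (n : nat) := {set 'I_n * 'I_n}.

Definition is_graph n (E : edges n) : bool :=
  [forall u, forall v, ((u, v) \in E) == ((v, u) \in E)] &&
  [forall u, (u, u) \notin E].

Definition connected_graph n (E : edges n) : bool :=
  [forall u, forall v, connect (fun x y => (x, y) \in E) u v].

Definition good_graph n (E : edges n) : bool :=
  [&& 0 < n, is_graph E & connected_graph E].

Definition gclass := forall n, edges n -> bool.

Definition relabel n (s : {perm 'I_n}) (E : edges n) : edges n :=
  [set (s p.1, s p.2) | p in E].

Definition iso_closed (C : gclass) : Prop :=
  forall n (E : edges n) (s : {perm 'I_n}), C n (relabel s E) = C n E.

Definition class_of_connected (C : gclass) : Prop :=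
  forall n (E : edges n), C n E -> good_graph E.

Definition num_iso_classes (C : gclass) n : nat :=
  #|[set [set relabel s E | s : {perm 'I_n}] | E in [set E : edges n | C n E]]|.

Definition valid_ids (k n : nat) (id : 'I_n -> nat) : bool :=
  [forall u, forall v, (id u == id v) ==> (u == v)] &&
  [forall v, (0 < id v <= n ^ k)].

Definition certif := seq bool.
Definition proofT n := 'I_n -> certif.

Definition proverT := forall n, edges n -> ('I_n -> nat) -> proofT n.
Definition verifierT := forall n, edges n -> ('I_n -> nat) -> proofT n -> 'I_n -> bool.

Definition nbhd n (E : edges n) (v : 'I_n) : {set 'I_n} :=
  v |: [set u | (v, u) \in E].

(* what v sees: certificates of N[v] indexed by identifiers, and the graph
   induced on N[v] (by identifiers) *)
Definition view_cert n (E : edges n) (id : 'I_n -> nat) (P : proofT n) (v : 'I_n)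
  (x : nat) : option certif :=
  if [pick u in nbhd E v | id u == x] is Some u then Some (P u) else None.

Definition view_adj n (E : edges n) (id : 'I_n -> nat) (v : 'I_n) (x y : nat) : bool :=
  [exists u in nbhd E v, exists w in nbhd E v,
     [&& id u == x, id w == y & (u, w) \in E]].

Definition same_view n n' (E : edges n) (E' : edges n') (id : 'I_n -> nat)
  (id' : 'I_n' -> nat) (P : proofT n) (P' : proofT n') (v : 'I_n) (v' : 'I_n') : Prop :=
  [/\ id v = id' v',
      forall x, view_cert E id P v x = view_cert E' id' P' v' x &
      forall x y, view_adj E id v x y = view_adj E' id' v' x y].

Definition local (k : nat) (A : verifierT) : Prop :=
  forall n n' (E : edges n) (E' : edges n') id id' (P : proofT n) (P' : proofT n')
    (v : 'I_n) (v' : 'I_n'),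
    good_graph E -> good_graph E' -> valid_ids k id -> valid_ids k id' ->
    same_view E E' id id' P P' v v' -> A n E id P v = A n' E' id' P' v'.

Definition is_PLS (k : nat) (C : gclass) (prover : proverT) (A : verifierT) : Prop :=
  [/\ local k A,
      (forall n (E : edges n) id, C n E -> valid_ids k id ->
         forall v, A n E id (prover n E id) v) &
      (forall n (E : edges n) id, good_graph E -> valid_ids k id -> ~~ C n E ->
         forall P : proofT n, exists v, ~~ A n E id P v)].

Definition complexity_le (k : nat) (C : gclass) (prover : proverT) (f : nat -> nat) : Prop :=
  forall n (E : edges n) id, C n E -> valid_ids k id ->
    forall v, size (prover n E id v) <= f n.

Definition local_complexity_le (k : nat) (C : gclass) (f : nat -> nat) : Prop :=
  exists prover A, is_PLS k C prover A /\ complexity_le k C prover f.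

Definition tiny (C : gclass) : Prop :=
  exists c : nat, forall n, 0 < n -> num_iso_classes C n <= c ^ n.

From mathcomp Require Import all_boot all_fingroup zify.
From Stdlib Require Import ClassicalEpsilon FunctionalExtensionality.
Set Implicit Arguments. Unset Strict Implicit. Unset Printing Implicit Defensive.

(* Every vertex receives the index of the isomorphism class of G among the n-vertex classes of
   C (about log |C_n| bits) and, in a prefix-free binary code, the number n, its own position in
   a fixed representative H of that class, and the identifier of the vertex placed at position 0
   (O(log n) bits, identifiers being at most n^k). A vertex checks that its neighbours agree with
   it on everything but the position, that their positions are distinct and are exactly the
   H-neighbours of its own, and that it claims position 0 only if it is the announced root.
   If every vertex accepts, connectivity makes the announced data global, so the positions form
   a covering map from G onto the connected graph H. All fibres of such a covering have the same
   size, and the fibre over 0 has at most one vertex because identifiers are distinct; hence the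
   covering is an isomorphism and G belongs to C. *)

Fixpoint bits (L m : nat) : seq bool :=
  if L is L'.+1 then odd m :: bits L' m./2 else [::].

Fixpoint bval (s : seq bool) : nat :=
  if s is b :: s' then b + (bval s').*2 else 0.

Lemma size_bits L m : size (bits L m) = L.
Proof. by elim: L m => //= L IH m; rewrite IH. Qed.

Lemma bitsK L m : m < 2 ^ L -> bval (bits L m) = m.
Proof.
elim: L m => [|L IH] m /=; first by case: m.
rewrite expnS => m_lt; rewrite IH; first exact: odd_double_half.
have := odd_double_half m; rewrite -!mul2n; lia.
Qed.

Lemma up_log_leq p n : 1 < p -> up_log p n <= n.
Proof. by move=> p_gt1; apply/up_log_min/ltnW/ltn_expl. Qed.

Lemma up_log_le_expn p a c m : 1 < p -> a <= c ^ m -> up_log p a <= m * up_log p c.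
Proof.
move=> p_gt1 a_le; apply: up_log_min => //; apply: leq_trans a_le _.
by rewrite mulnC expnM; case: (posnP m) => [-> // | m_gt0]; rewrite leq_exp2r // up_logP.
Qed.

Definition blen m := up_log 2 m.+1.

Lemma blenP m : m < 2 ^ blen m.
Proof. exact: up_logP. Qed.

Lemma blen_min m e : m < 2 ^ e -> blen m <= e.
Proof. exact: up_log_min. Qed.

(* The length in unary, then the digits: a prefix-free code. *)
Definition sdcode m := nseq (blen m) true ++ false :: bits (blen m) m.

Lemma size_sdcode m : size (sdcode m) = (blen m).*2.+1.
Proof. by rewrite size_cat size_nseq /= size_bits addnS addnn. Qed.

Lemma unary_cat_inj L L' s s' :
  nseq L true ++ false :: s = nseq L' true ++ false :: s' -> L = L' /\ s = s'.
Proof.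
elim: L L' => [|L IH] [|L'] //=; first by case.
by case=> /IH [-> ->].
Qed.

Lemma sdcode_cat_inj a b s t : sdcode a ++ s = sdcode b ++ t -> a = b /\ s = t.
Proof.
rewrite -!catA /= => /unary_cat_inj [eq_len].
move/eqP; rewrite eqseq_cat ?size_bits // => /andP [/eqP eq_bits /eqP ->].
by split=> //; move/(congr1 bval): eq_bits; rewrite !bitsK ?blenP.
Qed.

(* [lab_pos]: position of the vertex in the class representative; [lab_root]: identifier of
   the vertex at position 0. *)
Record label := Label { lab_class : nat; lab_size : nat; lab_pos : nat; lab_root : nat }.

(* The class index comes last, so its length need not be encoded. *)
Definition enc (t : label) : certif :=
  sdcode (lab_size t) ++ sdcode (lab_pos t) ++ sdcode (lab_root t) ++
  bits (blen (lab_class t)) (lab_class t).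

Lemma enc_inj : injective enc.
Proof.
move=> [i n l r] [i' n' l' r']; rewrite /enc /=.
move=> /sdcode_cat_inj [-> /sdcode_cat_inj [-> /sdcode_cat_inj [-> eq_bits]]].
have eq_len : blen i = blen i' by rewrite -(size_bits (blen i) i) eq_bits size_bits.
by move/(congr1 bval): eq_bits; rewrite !bitsK ?blenP // => ->.
Qed.

Lemma size_enc t : size (enc t) =
  (blen (lab_size t)).*2.+1 + (blen (lab_pos t)).*2.+1 + (blen (lab_root t)).*2.+1 +
  blen (lab_class t).
Proof.
by rewrite /enc size_cat size_sdcode size_cat size_sdcode size_cat size_sdcode size_bits !addnA.
Qed.

Definition dec (s : certif) : label :=
  epsilon (inhabits (Label 0 0 0 0)) (fun t => enc t = s).

Lemma encK : cancel enc dec.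
Proof.
move=> t; apply: enc_inj.
by apply: (epsilon_spec (inhabits _) (fun u => enc u = enc t)); exists t.
Qed.

Definition with_pos (t : label) m := Label (lab_class t) (lab_size t) m (lab_root t).

Definition header (t : label) := (lab_class t, lab_size t, lab_root t).

Lemma header_with_pos t t' : header t = header t' -> t = with_pos t' (lab_pos t).
Proof. by case: t t' => i n l r [i' n' l' r'] [-> -> ->]. Qed.

Lemma graph_sym n (E : edges n) : is_graph E -> forall u w, ((u, w) \in E) = ((w, u) \in E).
Proof. by case/andP=> /forallP symE _ u w; apply/eqP; move/forallP: (symE u). Qed.

Lemma connected_graph_const n (E : edges n) (T : eqType) (f : 'I_n -> T) :
  connected_graph E -> (forall u w, (u, w) \in E -> f u = f w) -> forall u w, f u = f w.
Proof.
move=> /forallP connE f_edge u w.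
have f_closed : closed (fun x y => (x, y) \in E) [pred z | f z == f u].
  by move=> a b /f_edge; rewrite !inE => ->.
have := closed_connect f_closed (forallP (connE u) w).
by rewrite !inE eqxx => /esym /eqP.
Qed.

Section Covering.

Variables (N n : nat) (E : edges N) (H : edges n) (g : 'I_N -> 'I_n).
Hypotheses (E_graph : is_graph E) (H_graph : is_graph H) (H_connected : connected_graph H).
Hypothesis g_edge : forall u w, (u, w) \in E -> (g u, g w) \in H.
Hypothesis g_inj_nbr : forall u w w', (u, w) \in E -> (u, w') \in E -> g w = g w' -> w = w'.
Hypothesis g_onto_nbr : forall u y, (g u, y) \in H -> exists2 w, (u, w) \in E & g w = y.

Let fibre y := [set u | g u == y].

(* Send each vertex over x to its unique neighbour over y: this is injective, since two
   vertices over x with a common neighbour w are neighbours of w with the same image. *)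
Lemma card_fibre_edge x y : (x, y) \in H -> #|fibre x| <= #|fibre y|.
Proof.
move=> xy.
pose lift u := odflt u [pick w | ((u, w) \in E) && (g w == y)].
have liftP u : g u = x -> (u, lift u) \in E /\ g (lift u) = y.
  move=> gu; rewrite /lift; case: pickP => [w /andP [uw /eqP] // | no_lift].
  have [w uw gw] : exists2 w, (u, w) \in E & g w = y by apply: g_onto_nbr; rewrite gu.
  by move: (no_lift w); rewrite uw gw eqxx.
rewrite -(card_in_imset (f := lift)).
  apply/subset_leq_card/subsetP => _ /imsetP [u + ->].
  by rewrite !inE => /eqP /liftP [_ ->].
move=> u u'; rewrite !inE => /eqP gu /eqP gu' same_lift.
have [uw _] := liftP u gu; have [u'w _] := liftP u' gu'.
apply: (g_inj_nbr (u := lift u)); first by rewrite (graph_sym E_graph).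
  by rewrite same_lift (graph_sym E_graph).
by rewrite gu gu'.
Qed.

Lemma card_fibre_const x y : #|fibre x| = #|fibre y|.
Proof.
apply: (connected_graph_const (f := fun z => #|fibre z|) H_connected) => a b ab.
by apply/eqP; rewrite eqn_leq !card_fibre_edge // -(graph_sym H_graph).
Qed.

Lemma covering_inj y0 : (forall u u', g u = y0 -> g u' = y0 -> u = u') -> injective g.
Proof.
move=> inj_y0 u u' gu.
have : #|fibre (g u)| <= 1.
  rewrite (card_fibre_const _ y0); apply/card_le1_eqP => a b.
  by rewrite !inE => /eqP ga /eqP gb; apply: inj_y0.
by move/card_le1_eqP; apply; rewrite inE ?gu.
Qed.

Lemma covering_bij (u0 : 'I_N) y0 :
  (forall u u', g u = y0 -> g u' = y0 -> u = u') -> bijective g.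
Proof.
move=> inj_y0; apply: (inj_card_bij (covering_inj inj_y0)).
suff g_onto : [set: 'I_n] \subset g @: [set: 'I_N].
  by rewrite -!cardsT (leq_trans (subset_leq_card g_onto)) ?leq_imset_card.
apply/subsetP => y _.
have : 0 < #|fibre y|.
  by rewrite (card_fibre_const _ (g u0)) card_gt0; apply/set0Pn; exists u0; rewrite inE.
by rewrite card_gt0 => /set0Pn [u]; rewrite inE => /eqP <-; rewrite imset_f.
Qed.

Lemma covering_edgeE : injective g -> forall u w, ((u, w) \in E) = ((g u, g w) \in H).
Proof.
move=> g_inj u w; apply/idP/idP => [/g_edge // | /g_onto_nbr [w' uw' /g_inj <-]].
exact: uw'.
Qed.

End Covering.

Lemma mem_relabel N (s : {perm 'I_N}) (E : edges N) a b :
  ((s a, s b) \in relabel s E) = ((a, b) \in E).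
Proof.
apply/imsetP/idP => [[[p1 p2] p_in [/perm_inj -> /perm_inj ->]] // | ab].
by exists (a, b).
Qed.

Lemma iso_closed_bij C N n (E : edges N) (H : edges n) (g : 'I_N -> 'I_n) :
  iso_closed C -> bijective g -> (forall u w, ((u, w) \in E) = ((g u, g w) \in H)) ->
  C n H -> C N E.
Proof.
move=> C_iso g_bij gE.
have Nn : N = n by rewrite -[N]card_ord -[n]card_ord (bij_eq_card g_bij).
subst n; have g_inj := bij_inj g_bij.
suff -> : H = relabel (perm g_inj) E by rewrite C_iso.
apply/setP => -[a b]; rewrite -[a](permKV (perm g_inj)) -[b](permKV (perm g_inj)).
by rewrite mem_relabel gE !permE.
Qed.

Definition iso_class n (E : edges n) : {set edges n} := [set relabel s E | s : {perm 'I_n}].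

Definition iso_classes (C : gclass) n : {set {set edges n}} :=
  [set iso_class E | E in [set E : edges n | C n E]].

Definition class_index (C : gclass) N (E : edges N) : nat :=
  index (iso_class E) (enum (iso_classes C N)).

Definition class_rep (C : gclass) n i : edges n :=
  odflt set0 [pick E in nth set0 (enum (iso_classes C n)) i].

Lemma class_index_lt (C : gclass) N (E : edges N) :
  C N E -> class_index C E < num_iso_classes C N.
Proof. by move=> CE; rewrite /num_iso_classes cardE index_mem mem_enum imset_f ?inE. Qed.

Lemma class_rep_index (C : gclass) N (E : edges N) :
  C N E -> exists s : {perm 'I_N}, class_rep C N (class_index C E) = relabel s E.
Proof.
move=> CE; have E_class : iso_class E \in enum (iso_classes C N).
  by rewrite mem_enum imset_f ?inE.
rewrite /class_rep /class_index (nth_index _ E_class).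
case: pickP => [_ /imsetP [s _ ->] | /(_ (relabel 1 E))]; first by exists s.
by rewrite (imset_f (fun s : {perm 'I_N} => relabel s E)).
Qed.

Definition target (C : gclass) (t : label) : edges (lab_size t) :=
  class_rep C (lab_size t) (lab_class t).

Definition nat_edge n (H : edges n) (a b : nat) : bool :=
  [exists x : 'I_n, exists y : 'I_n, [&& x == a :> nat, y == b :> nat & (x, y) \in H]].

Lemma nat_edgeE n (H : edges n) (x y : 'I_n) : nat_edge H x y = ((x, y) \in H).
Proof.
apply/existsP/idP => [[x' /existsP [y' /and3P [/eqP/val_inj <- /eqP/val_inj <-]]] // | xy].
by exists x; apply/existsP; exists y; rewrite !eqxx xy.
Qed.

Definition target_adj (C : gclass) (t : label) (m : nat) : bool :=
  nat_edge (target C t) (lab_pos t) m.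

Definition label_ok (C : gclass) (me : nat) (t : label) : Prop :=
  [/\ C (lab_size t) (target C t), lab_pos t < lab_size t &
      (lab_pos t = 0 -> me = lab_root t)].

Definition local_check (C : gclass) (me : nat) (cert : nat -> option certif)
    (nbr : nat -> bool) : Prop :=
  exists t : label,
  [/\ cert me = Some (enc t), label_ok C me t,
      forall x, nbr x -> exists2 m, cert x = Some (enc (with_pos t m)) & target_adj C t m,
      forall x y, nbr x -> nbr y -> cert x = cert y -> x = y &
      forall m, target_adj C t m -> exists2 x, nbr x & cert x = Some (enc (with_pos t m))].

Definition certifies (C : gclass) N (E : edges N) (id : 'I_N -> nat) (P : proofT N)
    (v : 'I_N) (t : label) : Prop :=
  [/\ P v = enc t, label_ok C (id v) t,
      forall w, (v, w) \in E -> exists2 m, P w = enc (with_pos t m) & target_adj C t m,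
      forall w w', (v, w) \in E -> (v, w') \in E -> P w = P w' -> w = w' &
      forall m, target_adj C t m -> exists2 w, (v, w) \in E & P w = enc (with_pos t m)].

Definition asbool (P : Prop) : bool := if excluded_middle_informative P then true else false.

Lemma asboolP P : reflect P (asbool P).
Proof. by rewrite /asbool; case: excluded_middle_informative => p; constructor. Qed.

Definition verifier (C : gclass) : verifierT := fun n E id P v =>
  asbool (local_check C (id v) (view_cert E id P v) (view_adj E id v (id v))).

Lemma verifier_local C k : local k (verifier C).
Proof.
move=> n n' E E' id id' P P' v v' _ _ _ _ [same_id same_cert same_adj].
rewrite /verifier same_id (functional_extensionality _ _ same_cert).
by rewrite (functional_extensionality _ _ (same_adj _)).
Qed.

Lemma valid_ids_inj k n (id : 'I_n -> nat) : valid_ids k id -> injective id.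
Proof.
case/andP=> /forallP id_inj _ u v /eqP uv.
by apply/eqP; move/forallP/(_ v)/implyP: (id_inj u); apply.
Qed.

Section View.

Variables (k N : nat) (E : edges N) (id : 'I_N -> nat) (P : proofT N) (v : 'I_N).
Hypothesis id_valid : valid_ids k id.

Lemma view_cert_nbhd w : w \in nbhd E v -> view_cert E id P v (id w) = Some (P w).
Proof.
move=> w_in; rewrite /view_cert.
case: pickP => [u /andP [_ /eqP /(valid_ids_inj id_valid) -> //] |].
by move/(_ w); rewrite w_in eqxx.
Qed.

Lemma view_cert_self : view_cert E id P v (id v) = Some (P v).
Proof. by rewrite view_cert_nbhd ?setU11. Qed.

Lemma view_cert_nbr w : (v, w) \in E -> view_cert E id P v (id w) = Some (P w).
Proof. by move=> vw; rewrite view_cert_nbhd // /nbhd !inE vw orbT. Qed.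

Lemma view_adjP x : reflect (exists2 w, (v, w) \in E & x = id w) (view_adj E id v (id v) x).
Proof.
apply: (iffP existsP) => [[u /andP [_ /existsP [w /andP [_]]]] | [w vw ->]].
  by case/and3P=> /eqP /(valid_ids_inj id_valid) -> /eqP <- vw; exists w.
exists v; rewrite /nbhd setU11 /=; apply/existsP; exists w.
by rewrite !inE vw orbT !eqxx.
Qed.

Lemma view_adj_nbr w : (v, w) \in E -> view_adj E id v (id v) (id w).
Proof. by move=> vw; apply/view_adjP; exists w. Qed.

Lemma local_checkE C : local_check C (id v) (view_cert E id P v) (view_adj E id v (id v)) <->
  exists t, certifies C E id P v t.
Proof.
split=> [[t [cert_v t_ok nbr_lab nbr_inj nbr_onto]] | [t [Pv t_ok nbr_lab nbr_inj nbr_onto]]];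
  exists t; split=> //.
- by move: cert_v; rewrite view_cert_self => -[].
- move=> w vw; have [m] := nbr_lab _ (view_adj_nbr vw).
  by rewrite view_cert_nbr // => -[Pw] adj; exists m.
- move=> w w' vw vw' Pww'; apply: (valid_ids_inj id_valid).
  by apply: nbr_inj; rewrite ?view_adj_nbr ?view_cert_nbr ?Pww'.
- move=> m /nbr_onto [_ /view_adjP [w vw ->]].
  by rewrite view_cert_nbr // => -[Pw]; exists w.
- by rewrite view_cert_self Pv.
- move=> _ /view_adjP [w vw ->]; have [m Pw adj] := nbr_lab _ vw.
  by exists m; rewrite ?view_cert_nbr ?Pw.
- move=> _ _ /view_adjP [w vw ->] /view_adjP [w' vw' ->].
  by rewrite !view_cert_nbr // => -[Pww']; rewrite (nbr_inj w w').
- move=> m /nbr_onto [w vw Pw]; exists (id w); first exact: view_adj_nbr.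
  by rewrite view_cert_nbr ?Pw.
Qed.

End View.

Definition root_id N (id : 'I_N -> nat) (s : {perm 'I_N}) : nat :=
  if [pick u | s u == 0 :> nat] is Some u then id u else 0.

Definition prover (C : gclass) : proverT := fun N E id v =>
  if [pick s : {perm 'I_N} | class_rep C N (class_index C E) == relabel s E] is Some s
  then enc (Label (class_index C E) N (s v) (root_id id s))
  else [::].

Lemma proverE (C : gclass) N (E : edges N) id : C N E ->
  exists2 s : {perm 'I_N}, class_rep C N (class_index C E) = relabel s E &
    forall v, prover C E id v = enc (Label (class_index C E) N (s v) (root_id id s)).
Proof.
move=> /class_rep_index [s0 rep_s0]; rewrite /prover.
by case: pickP => [s /eqP rep_s | /(_ s0)]; [exists s | rewrite rep_s0 eqxx].
Qed.

Lemma prover_certifies (C : gclass) N (E : edges N) id v :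
  iso_closed C -> C N E -> exists t, certifies C E id (prover C E id) v t.
Proof.
move=> C_iso CE; have [s rep_s Pw] := proverE id CE.
have adjE (w : 'I_N) m : target_adj C (Label (class_index C E) N (s w) (root_id id s)) m =
    nat_edge (relabel s E) (s w) m by rewrite /target_adj /target rep_s.
eexists; split; first exact: Pw.
- split=> /=; [by rewrite /target rep_s C_iso | exact: ltn_ord |].
  rewrite /root_id; case: pickP => [u /eqP su sv | /(_ v) /eqP //].
  by rewrite (perm_inj (val_inj (etrans su (esym sv)))).
- move=> w vw; exists (s w); first exact: Pw.
  by rewrite adjE nat_edgeE mem_relabel.
- by move=> w w' _ _; rewrite !Pw => /enc_inj [/val_inj /perm_inj].
- move=> m; rewrite adjE => /existsP [x /existsP [y /and3P [/eqP/val_inj -> /eqP <-]]].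
  rewrite -[y](permKV s) mem_relabel => vy.
  by exists (s^-1 y)%g; rewrite ?Pw.
Qed.

Section Soundness.

Variables (C : gclass) (k N : nat) (E : edges N) (id : 'I_N -> nat) (P : proofT N).
Arguments C : clear implicits.
Hypotheses (C_iso : iso_closed C) (C_connected : class_of_connected C).
Hypotheses (E_good : good_graph E) (id_valid : valid_ids k id).
Hypothesis P_certified : forall v, exists t, certifies C E id P v t.

Let lab v := dec (P v).

Lemma certifies_lab v : certifies C E id P v (lab v).
Proof. by have [t ct] := P_certified v; case: (ct) => Pv; rewrite /lab Pv encK. Qed.

Lemma lab_nbr v w : (v, w) \in E -> lab w = with_pos (lab v) (lab_pos (lab w)).
Proof.
by move=> vw; have [_ _ /(_ w vw) [m Pw _] _ _] := certifies_lab v; rewrite {1 3}/lab Pw encK.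
Qed.

Let N_gt0 : 0 < N. Proof. by case/and3P: E_good. Qed.
Let v0 : 'I_N := Ordinal N_gt0.
Let t0 := lab v0.
Let n := lab_size t0.
Let H := target C t0.

Lemma labE v : lab v = with_pos t0 (lab_pos (lab v)).
Proof.
apply: header_with_pos.
case/and3P: E_good => _ _ E_connected.
apply: (connected_graph_const (f := fun u => header (lab u)) E_connected) => u w uw.
by rewrite (lab_nbr uw).
Qed.

Lemma lab_pos_lt v : lab_pos (lab v) < n.
Proof. by have [_ [_ + _] _ _ _] := certifies_lab v; rewrite labE. Qed.

Let g v : 'I_n := Ordinal (lab_pos_lt v).

Lemma target_adj_lab v m : target_adj C (lab v) m = nat_edge H (g v) m.
Proof. by rewrite /target_adj labE. Qed.

Lemma P_lab_pos v : P v = enc (with_pos t0 (g v)).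
Proof. by have [+ _ _ _ _] := certifies_lab v; rewrite labE. Qed.

Lemma g_edge v w : (v, w) \in E -> (g v, g w) \in H.
Proof.
move=> vw; have [_ _ /(_ w vw) [m Pw adj] _ _] := certifies_lab v.
suff mE : m = g w by rewrite -nat_edgeE -target_adj_lab -mE.
by move: Pw; rewrite P_lab_pos labE => /enc_inj [].
Qed.

Lemma g_inj_nbr v w w' : (v, w) \in E -> (v, w') \in E -> g w = g w' -> w = w'.
Proof.
move=> vw vw' gww'; have [_ _ _ /(_ w w' vw vw') nbr_inj _] := certifies_lab v.
by apply: nbr_inj; rewrite !P_lab_pos gww'.
Qed.

Lemma g_onto_nbr v y : (g v, y) \in H -> exists2 w, (v, w) \in E & g w = y.
Proof.
rewrite -nat_edgeE -target_adj_lab => adj.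
have [_ _ _ _ /(_ _ adj) [w vw Pw]] := certifies_lab v.
by exists w => //; apply: val_inj; move: Pw; rewrite P_lab_pos labE => /enc_inj [].
Qed.

Let y0 : 'I_n := Ordinal (leq_ltn_trans (leq0n _) (lab_pos_lt v0)).

Lemma g_inj_root v v' : g v = y0 -> g v' = y0 -> v = v'.
Proof.
have id_root u : g u = y0 -> id u = lab_root t0.
  move=> gu; have [_ [_ _ root_pos] _ _ _] := certifies_lab u.
  rewrite root_pos; first by rewrite labE.
  by rewrite -[lab_pos _]/(val (g u)) gu.
move=> /id_root idv /id_root idv'.
by apply: (valid_ids_inj id_valid); rewrite idv idv'.
Qed.

Lemma certified_sound : C N E.
Proof.
have [E_graph H_graph H_connected] : [/\ is_graph E, is_graph H & connected_graph H].
  have [_ [CH _ _] _ _ _] := certifies_lab v0.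
  by case/and3P: E_good => _ -> _; case/and3P: (C_connected CH) => _ -> ->.
have g_bij : bijective g.
  exact: (covering_bij E_graph H_graph H_connected g_inj_nbr g_onto_nbr v0 g_inj_root).
apply: (iso_closed_bij C_iso g_bij (covering_edgeE g_edge g_onto_nbr (bij_inj g_bij))).
by have [_ [] ] := certifies_lab v0.
Qed.

End Soundness.

Lemma size_prover (C : gclass) k N (E : edges N) id v : C N E -> valid_ids k id ->
  size (prover C E id v) <=
    up_log 2 (num_iso_classes C N) + (2 * k + 7) * up_log 2 N + (2 * k + 7).
Proof.
move=> CE /andP [_ /forallP id_le]; have [s _ ->] := proverE id CE; rewrite size_enc /=.
set u := up_log 2 N; have N_le : N <= 2 ^ u by apply: up_logP.
have blen_N : blen N <= u.+1 by apply: blen_min; rewrite expnS; lia.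
have blen_pos : blen (s v) <= u by apply/blen_min/(leq_trans (ltn_ord _)).
have blen_root : blen (root_id id s) <= k * u + 1.
  apply: blen_min; rewrite addn1 expnS (mulnC k u) expnM.
  have : root_id id s <= (2 ^ u) ^ k.
    have Nk : N ^ k <= (2 ^ u) ^ k by case: (posnP k) => [-> // | k_gt0]; rewrite leq_exp2r.
    rewrite /root_id; case: pickP => // w _.
    by case/andP: (id_le w) => _ /leq_trans; apply.
  have pow_gt0 : 0 < (2 ^ u) ^ k by rewrite !expn_gt0.
  lia.
have blen_class : blen (class_index C E) <= up_log 2 (num_iso_classes C N).
  exact/leq_up_log/class_index_lt.
rewrite mulnDl -mulnA; lia.
Qed.

Lemma prover_verifier_PLS (C : gclass) k :
  iso_closed C -> class_of_connected C -> is_PLS k C (prover C) (verifier C).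
Proof.
move=> C_iso C_connected; split; first exact: verifier_local.
  move=> N E id CE id_valid v; apply/asboolP/(local_checkE _ _ _ id_valid).
  exact: prover_certifies.
move=> N E id E_good id_valid notCE P.
have [v rejects | accepts] := pickP (fun v => ~~ verifier C E id P v); first by exists v.
case/negP: notCE; apply: (certified_sound C_iso C_connected E_good id_valid) => v.
by apply/(local_checkE _ _ _ id_valid)/asboolP/negbFE/accepts.
Qed.

Theorem theorem3p1 (C : gclass) (k : nat) :
  0 < k -> iso_closed C -> class_of_connected C ->
  (exists c : nat, local_complexity_le k C
     (fun n => up_log 2 (num_iso_classes C n) + c * up_log 2 n + c)) /\
  (tiny C -> exists c : nat, local_complexity_le k C (fun n => c * n + c)).
Proof.
move=> _ C_iso C_connected; have PLS := prover_verifier_PLS k C_iso C_connected.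
split.
  exists (2 * k + 7), (prover C), (verifier C); split=> // N E id CE id_valid v.
  exact: size_prover.
case=> c C_tiny; exists (up_log 2 c + (2 * k + 7)), (prover C), (verifier C); split=> //.
move=> N E id CE id_valid v; apply: leq_trans (size_prover v CE id_valid) _.
have N_gt0 : 0 < N by case/and3P: (C_connected _ _ CE).
have classes_le := up_log_le_expn (isT : 1 < 2) (C_tiny N N_gt0).
have := leq_mul (leqnn (2 * k + 7)) (up_log_leq N (isT : 1 < 2)); rewrite mulnDl; lia.
Qed.
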